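(* There is $p=O(\log n)$ such that $D^{p}(\textsc{IndSub}(\text{co-}P_3))=\tilde O(n)$.
   Context: $\text{co-}P_3$ is the complement of the path on three vertices (one edge plus an isolated vertex). Insertion-only streaming model: the edges of an $n$-vertex undirected input graph $G$ arrive as a stream in arbitrary order; the algorithm knows $n$, makes $p$ passes, and has $S$ bits of memory. $\textsc{IndSub}(H)$: decide whether $G$ contains $H$ as an induced subgraph and if so output the vertex set of a copy. $D^p(\Pi)$ is the minimum space of a deterministic $p$-pass streaming algorithm solving $\Pi$. $\tilde O$ hides polylogarithmic factors in $n$. *)

From mathcomp Require Import all_boot.
Set Implicit Arguments. Unset Strict Implicit. Unset Printing Implicit Defensive.

Definition simple_graph (n : nat) (E : {set {set 'I_n}}) : Prop :=
  forall x, x \in E -> #|x| = 2.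

Definition edge_stream (n : nat) (E : {set {set 'I_n}}) (s : seq {set 'I_n}) : Prop :=
  perm_eq s (enum E).

(* A T-vertex set induces a copy of co-P3 (one edge plus an isolated vertex)
   iff it has 3 vertices and the induced subgraph has exactly one edge. *)
Definition induces_coP3 (n : nat) (E : {set {set 'I_n}}) (T : {set 'I_n}) : Prop :=
  #|T| = 3 /\ #|[set x in E | x \subset T]| = 1.

Definition memory (S : nat) := {ffun 'I_S -> bool}.

(* A deterministic multi-pass streaming algorithm with S bits of memory on
   n-vertex graphs (knows n; arbitrary computation per step). *)
Record stream_alg (n S : nat) := StreamAlg {
  sa_init : memory S;
  sa_step : memory S -> {set 'I_n} -> memory S;
  sa_endpass : memory S -> memory S;
  sa_out : memory S -> option {set 'I_n}          (* None = no copy *)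
}.

Definition run_passes (n S : nat) (A : stream_alg n S) (p : nat)
    (s : seq {set 'I_n}) : memory S :=
  iter p (fun m => sa_endpass A (foldl (sa_step A) m s)) (sa_init A).

Definition output (n S : nat) (A : stream_alg n S) (p : nat) (s : seq {set 'I_n}) :=
  sa_out A (run_passes A p s).

Definition solves_IndSub_coP3 (n S : nat) (A : stream_alg n S) (p : nat) : Prop :=
  forall (E : {set {set 'I_n}}) (s : seq {set 'I_n}),
    simple_graph E -> edge_stream E s ->
    match output A p s with
    | Some T => induces_coP3 E T
    | None => forall T, ~ induces_coP3 E T
    end.

From mathcomp Require Import all_boot zify.
Set Implicit Arguments. Unset Strict Implicit. Unset Printing Implicit Defensive.

(* G has no induced co-P3 iff non-adjacency is an equivalence relation, i.e.
   G is complete multipartite.  Label every vertex u by rep u, the least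
   vertex not adjacent to u (u itself counts).  Since rep u < m iff fewer than
   m of the vertices below m are neighbours of u, all labels are found at once
   by a binary search of log n passes keeping one counter per vertex.  An edge
   whose ends have the same label gives a copy together with that label.
   Otherwise the labels properly colour G, so the label class of u is inside
   its non-neighbourhood, with equality for all u iff G is complete
   multipartite; comparing deg u + |class of u| with n finds a vertex u with
   a non-neighbour w of another label, and u, w and the smaller of their two
   labels form a copy.  Every pass collects all data at once, so one extra
   pass suffices, and the state takes O(n log n) bits. *)

(** * Finite-state streaming algorithms *)

Lemma card_memory S : #|memory S| = 2 ^ S.
Proof. by rewrite card_ffun card_bool card_ord. Qed.

Lemma stream_alg_of_finType n S (X : finType) (init : X)
    (step : X -> {set 'I_n} -> X) (endpass : X -> X) (out : X -> option {set 'I_n}) :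
  #|X| <= 2 ^ S ->
  exists A : stream_alg n S, forall p s,
    output A p s = out (iter p (fun x => endpass (foldl step x s)) init).
Proof.
rewrite -card_memory => leXM.
pose enc (x : X) : memory S := enum_val (widen_ord leXM (enum_rank x)).
have enc_inj : injective enc.
  move=> x y /enum_val_inj /(congr1 val) /= /val_inj; exact: enum_rank_inj.
pose dec (m : memory S) : X := odflt init [pick x | enc x == m].
have encK : cancel enc dec.
  rewrite /dec => x; case: pickP => [y /eqP /enc_inj -> // |].
  by move/(_ x); rewrite eqxx.
pose A := StreamAlg (enc init) (fun m e => enc (step (dec m) e))
  (fun m => enc (endpass (dec m))) (fun m => out (dec m)).
exists A => p s.
have foldA x : foldl (sa_step A) (enc x) s = enc (foldl step x s).
  by elim: s x => //= e s IH x; rewrite encK IH.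
have runA : run_passes A p s = enc (iter p (fun x => endpass (foldl step x s)) init).
  by elim: p => //= p IH; rewrite IH foldA encK.
by rewrite /output runA /= encK.
Qed.

Lemma stream_alg_of_passes n S (P C : finType) (start : P) (c0 : C)
    (collect : P -> C -> {set 'I_n} -> C) (update : P -> C -> P)
    (out : P -> option {set 'I_n}) :
  #|P| * #|C| <= 2 ^ S ->
  exists A : stream_alg n S, forall p s,
    output A p s = out (iter p (fun q => update q (foldl (collect q) c0 s)) start).
Proof.
rewrite -card_prod => leXS.
pose step (x : P * C) e := (x.1, collect x.1 x.2 e).
pose endpass (x : P * C) := (update x.1 x.2, c0).
have [A outA] := stream_alg_of_finType (start, c0) step endpass (fun x => out x.1) leXS.
exists A => p s; rewrite outA.
have fold_step q c : foldl step (q, c) s = (q, foldl (collect q) c s).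
  by elim: s c => //= e s IH c; rewrite IH.
suff iter_pass k : iter k (fun x => endpass (foldl step x s)) (start, c0) =
    (iter k (fun q => update q (foldl (collect q) c0 s)) start, c0).
  by rewrite iter_pass.
by elim: k => //= k ->; rewrite fold_step.
Qed.

Definition find_step (T : Type) (P : pred T) (b : option T) (x : T) : option T :=
  if P x then Some x else b.

Lemma foldl_find_stepP (T : eqType) (P : pred T) (s : seq T) :
  if foldl (find_step P) None s is Some x then (x \in s) && P x else ~~ has P s.
Proof.
rewrite -[s in foldl _ _ s]revK foldl_rev.
have : forall t, if foldr (fun x b => find_step P b x) None t is Some x
                 then (x \in t) && P x else ~~ has P t.
  elim=> //= x t IH; rewrite /find_step; case: ifP => [Px | nPx] /=.
    by rewrite mem_head Px.
  by move: IH; case: foldr => [y /andP [yt ->] | ->]; rewrite ?in_cons ?yt ?orbT ?nPx.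
by move/(_ (rev s)); case: foldr => [y|]; rewrite ?mem_rev ?has_rev.
Qed.

Definition union_step (T : finType) (v : T) (R e : {set T}) : {set T} :=
  if v \in e then R :|: e else R.

Lemma mem_foldl_union_step (T : finType) (v w : T) (R : {set T}) s :
  (w \in foldl (union_step v) R s) =
  (w \in R) || has (fun e : {set T} => (v \in e) && (w \in e)) s.
Proof.
elim: s R => [|e s IH] R /=; first by rewrite orbF.
by rewrite IH /union_step; case: (v \in e); rewrite ?inE -?orbA.
Qed.

Definition bump N (x : 'I_N.+1) : 'I_N.+1 := inord (minn x.+1 N).

Definition count_step (T A : finType) N (P : T -> pred A)
    (f : {ffun T -> 'I_N.+1}) (e : A) : {ffun T -> 'I_N.+1} :=
  [ffun u => if P u e then bump (f u) else f u].

Lemma foldl_count_step (T A : finType) N (P : T -> pred A)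
    (f : {ffun T -> 'I_N.+1}) (s : seq A) (u : T) :
  foldl (count_step P) f s u = minn (f u + count (P u) s) N :> nat.
Proof.
elim: s f => [|e s IH] f /=.
  by rewrite addn0; apply/esym/minn_idPl; rewrite -ltnS ltn_ord.
rewrite IH ffunE; case: (P u e) => /=; last by rewrite add0n.
rewrite inordK ?ltnS ?geq_minr //; lia.
Qed.

Lemma card_ord_lt n m : #|[set i : 'I_n | i < m]| = minn m n.
Proof.
case: (leqP m n) => [le_mn | lt_nm].
  have widen_inj : injective (widen_ord le_mn) by move=> i j /(congr1 val) /= /val_inj.
  rewrite -[RHS](card_ord m) -(card_imset _ widen_inj).
  apply: eq_card => i; rewrite inE; apply/idP/imsetP => [lt_im | [j _ ->]].
    by exists (Ordinal lt_im) => //; apply: val_inj.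
  exact: ltn_ord j.
rewrite -[RHS](card_ord n); apply: eq_card => i.
by rewrite inE (leq_trans (ltn_ord i) (ltnW lt_nm)).
Qed.

Lemma round_down_halve r i :
  (if 2 ^ i.+1 * (r %/ 2 ^ i.+1) + 2 ^ i <= r
   then 2 ^ i.+1 * (r %/ 2 ^ i.+1) + 2 ^ i else 2 ^ i.+1 * (r %/ 2 ^ i.+1))
  = 2 ^ i * (r %/ 2 ^ i).
Proof.
have d_gt0 : 0 < 2 ^ i by rewrite expn_gt0.
rewrite expnSr divnMA divn2; set d := 2 ^ i in d_gt0 *; set k := r %/ d.
have k_split := odd_double_half k; rewrite -muln2 in k_split.
have -> : (d * 2 * k./2 + d <= r) = odd k.
  rewrite (_ : d * 2 * k./2 + d = (k./2 * 2).+1 * d); last by nia.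
  by rewrite -leq_divRL // -/k; case: odd k_split; lia.
by case: odd k_split => k_split; rewrite -[in RHS]k_split; nia.
Qed.

Lemma card_set (T : finType) : #|{set T}| = 2 ^ #|T|.
Proof. by rewrite -cardsT -card_powerset powersetT cardsT. Qed.

Lemma leq_mul_exp2 a b x y : a <= 2 ^ x -> b <= 2 ^ y -> a * b <= 2 ^ (x + y).
Proof. by move=> le_a le_b; rewrite expnD leq_mul. Qed.

(** * Graphs without an induced co-P3 *)

Definition incident_in n (W : {set 'I_n}) (u : 'I_n) (e : {set 'I_n}) : bool :=
  (u \in e) && (e :\ u \subset W).

Definition monochromatic n (lo : 'I_n -> 'I_n) (e : {set 'I_n}) : bool :=
  [forall x in e, forall y in e, lo x == lo y].

(* If lo u < lo w, then lo u lies below the least non-neighbour of w, hence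
   is adjacent to w, while both are non-adjacent to u. *)
Definition split_triple n (lo : 'I_n -> 'I_n) (u w : 'I_n) : {set 'I_n} :=
  if lo u < lo w then [set w; lo u; u] else [set u; lo w; w].

Definition suspect n (lo : 'I_n -> 'I_n) (deg : 'I_n -> nat) : option 'I_n :=
  [pick u | deg u + #|[set w | lo w == lo u]| != n].

Definition verdict n (lo : 'I_n -> 'I_n) (deg : 'I_n -> nat)
    (mono : option {set 'I_n}) (R : {set 'I_n}) : option {set 'I_n} :=
  if mono is Some e then Some (e :|: lo @: e)
  else if suspect lo deg is Some u then
    if [pick w | (w \notin R) && (lo w != lo u)] is Some w
    then Some (split_triple lo u w) else None (* unreachable on correct data *)
  else None.

Definition answers_coP3 n (E : {set {set 'I_n}}) (o : option {set 'I_n}) : Prop :=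
  if o is Some T then induces_coP3 E T else forall T, ~ induces_coP3 E T.

Section SimpleGraph.
Variables (n : nat) (E : {set {set 'I_n}}).
Hypothesis E_simple : simple_graph E.
Local Notation V := 'I_n.

Definition adj (a b : V) : bool := [set a; b] \in E.
Definition nbrs (u : V) : {set V} := [set w | adj u w].

Lemma adjC a b : adj a b = adj b a.
Proof. by rewrite /adj setUC. Qed.

Lemma adj_irrefl a : ~~ adj a a.
Proof. by apply/negP; rewrite /adj setUid => /E_simple; rewrite cards1. Qed.

Lemma adj_neq a b : adj a b -> a != b.
Proof. by apply: contraTneq => ->; exact: adj_irrefl. Qed.

Lemma edgeP e : e \in E -> exists a b, e = [set a; b] /\ adj a b.
Proof.
move=> eE; have /eqP /cards2P [a [b [_ e_ab]]] := E_simple eE.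
by exists a, b; rewrite /adj -e_ab.
Qed.

Lemma edge_at e u : e \in E -> u \in e -> exists v, e = [set u; v] /\ adj u v.
Proof.
move=> eE; have [a [b [e_ab ab]]] := edgeP eE.
by rewrite e_ab => /set2P [] ->; [exists b | exists a; rewrite adjC setUC].
Qed.

Lemma card_nbrs_lt u W : #|nbrs u :&: W| < n.
Proof.
have : nbrs u \proper [set: V].
  by apply/properP; split; [exact: subsetT | exists u; rewrite ?inE ?adj_irrefl].
move/proper_card; rewrite cardsT card_ord; apply: leq_ltn_trans.
exact/subset_leq_card/subsetIl.
Qed.

Lemma induces_coP3_set3 a b c :
  adj a b -> ~~ adj a c -> ~~ adj b c -> induces_coP3 E [set a; b; c].
Proof.
move=> ab ac bc.
have [ca cb] : c != a /\ c != b.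
  by split; apply: contraTneq ab => <-; rewrite // adjC.
split.
  by rewrite -setUA cardsU1 cards2 !inE negb_or (adj_neq ab) !(eq_sym _ c) ca cb.
apply/eqP/cards1P; exists [set a; b]; apply/setP => x; rewrite !inE.
apply/andP/eqP => [[xE] | ->]; last by rewrite -/(adj a b) ab subsetUl.
have [y [z [-> yz]]] := edgeP xE; rewrite subUset !sub1set !inE -!orbA.
move=> /andP [yT zT].
case/or3P: yT => /eqP y_; case/or3P: zT => /eqP z_; subst y z.
all: by [rewrite setUC | move: yz; rewrite ?(negbTE ac) ?(negbTE bc)
        | move: yz; rewrite ?(negbTE (adj_irrefl _)) // adjC ?(negbTE ac) ?(negbTE bc)].
Qed.

Lemma induces_coP3_adj T :
  induces_coP3 E T -> exists a b c, [/\ adj a b, ~~ adj a c & ~~ adj b c].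
Proof.
case=> T3 /eqP /cards1P [e edgesT].
have : e \in [set x in E | x \subset T] by rewrite edgesT set11.
rewrite inE => /andP [eE eT]; have [a [b [e_ab ab]]] := edgeP eE.
have [c cT ce] : exists2 c, c \in T & c \notin e.
  by apply/subsetPn; apply/negP => /subset_leq_card; rewrite T3 (E_simple eE).
have nonadj_c x : x \in e -> ~~ adj x c.
  move=> xe; apply/negP => xc.
  have : [set x; c] \in [set x in E | x \subset T].
    by rewrite inE -/(adj x c) xc subUset !sub1set cT (subsetP eT).
  by rewrite edgesT => /set1P e_xc; move: ce; rewrite -e_xc set22.
by exists a, b, c; split; rewrite // nonadj_c // e_ab !inE eqxx ?orbT.
Qed.

Section Labelling.
Variable lo : V -> V.
Hypothesis lo_nonadj : forall u, ~~ adj u (lo u).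
Hypothesis lo_least : forall u w, ~~ adj u w -> lo u <= w.

Lemma adj_below_lo u (w : V) : w < lo u -> adj u w.
Proof. by apply: contraLR => /lo_least; rewrite -leqNgt. Qed.

Lemma leq_card_nbrs_below u m :
  (m <= #|nbrs u :&: [set w : V | w < m]|) = (m <= lo u).
Proof.
apply/idP/idP => [le_m_card | le_m_lo].
  rewrite leqNgt; apply/negP => lt_lo_m.
  have : nbrs u :&: [set w : V | w < m] \proper [set w : V | w < m].
    apply/properP; split; first exact: subsetIr.
    by exists (lo u); rewrite !inE ?lt_lo_m // (negbTE (lo_nonadj u)).
  move/proper_card; rewrite card_ord_lt; lia.
have below_nbrs : [set w : V | w < m] \subset nbrs u.
  by apply/subsetP => w; rewrite !inE => lt_w_m; apply/adj_below_lo/(leq_trans lt_w_m).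
rewrite (setIidPr below_nbrs) card_ord_lt.
by have := ltn_ord (lo u); lia.
Qed.

Lemma induces_coP3_monochromatic e :
  e \in E -> monochromatic lo e -> induces_coP3 E (e :|: lo @: e).
Proof.
move=> eE; have [a [b [-> ab]]] := edgeP eE; move=> mono.
have lo_ab : lo a = lo b.
  by apply/eqP; move/forall_inP: mono => /(_ a (set21 a b)) /forall_inP /(_ b (set22 a b)).
rewrite imsetU1 imset_set1 lo_ab setUid.
by apply: induces_coP3_set3; rewrite // -lo_ab.
Qed.

Lemma induces_coP3_split u w :
  ~~ adj u w -> lo u != lo w -> induces_coP3 E (split_triple lo u w).
Proof.
rewrite /split_triple => uw.
case: ltngtP => [lt_uw _ | lt_wu _ | /val_inj ->]; last by rewrite eqxx.
  by apply: induces_coP3_set3; [exact: adj_below_lo | rewrite adjC | rewrite adjC].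
by apply: induces_coP3_set3; [exact: adj_below_lo | | rewrite adjC].
Qed.

Section ProperLabelling.
Hypothesis lo_proper : forall a b, adj a b -> lo a != lo b.
Local Notation class u := [set w | lo w == lo u].

Lemma class_sub_nonnbrs u : class u \subset ~: nbrs u.
Proof.
apply/subsetP => w; rewrite !inE => /eqP lo_wu.
by apply/negP => /lo_proper; rewrite lo_wu eqxx.
Qed.

Lemma card_nbrs_class u : (#|nbrs u| + #|class u| == n) = (class u == ~: nbrs u).
Proof.
have := subset_leq_card (class_sub_nonnbrs u).
rewrite -(leq_add2l #|nbrs u|) cardsC card_ord => le_n.
by rewrite eqEcard class_sub_nonnbrs -(leq_add2l #|nbrs u|) cardsC card_ord eqn_leq le_n.
Qed.

Lemma no_coP3_of_card_class :
  (forall u, #|nbrs u| + #|class u| = n) -> forall T, ~ induces_coP3 E T.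
Proof.
move=> card_class T /induces_coP3_adj [a [b [c [ab ac bc]]]].
have same_lo x y : ~~ adj x y -> lo y = lo x.
  move: (card_class x) => /eqP; rewrite card_nbrs_class => /eqP class_x xy.
  have : y \in ~: nbrs x by rewrite !inE.
  by rewrite -class_x inE => /eqP.
by move: (lo_proper ab); rewrite -(same_lo _ _ ac) -(same_lo _ _ bc) eqxx.
Qed.

Lemma exists_nonadj_of_card_class u :
  #|nbrs u| + #|class u| != n -> exists w, ~~ adj u w && (lo w != lo u).
Proof.
rewrite card_nbrs_class eqEsubset class_sub_nonnbrs /= => /subsetPn [w].
by rewrite !inE => uw lo_w; exists w; rewrite uw lo_w.
Qed.

End ProperLabelling.

Lemma verdict_correct (deg : V -> nat) (mono : option {set V}) (R : {set V}) :
  (forall u, deg u = #|nbrs u|) ->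
  (if mono is Some e then e \in E /\ monochromatic lo e
   else forall e, e \in E -> ~~ monochromatic lo e) ->
  (forall u w, suspect lo deg = Some u -> w != u -> (w \in R) = adj u w) ->
  answers_coP3 E (verdict lo deg mono R).
Proof.
move=> deg_nbrs mono_spec R_spec; rewrite /verdict.
case: mono mono_spec => [e [eE mono] | no_mono].
  exact: induces_coP3_monochromatic.
have lo_proper a b : adj a b -> lo a != lo b.
  move=> ab; apply: contra (no_mono _ ab) => /eqP lo_ab.
  by apply/forall_inP => x /set2P [] ->; apply/forall_inP => y /set2P [] ->; rewrite ?lo_ab.
case suspect_u: (suspect lo deg) => [u|]; last first.
  apply: (no_coP3_of_card_class lo_proper) => u; apply/eqP.
  by move: suspect_u; rewrite /suspect; case: pickP => // /(_ u) /negbFE; rewrite deg_nbrs.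
have [w /andP [uw lo_w]] : exists w, ~~ adj u w && (lo w != lo u).
  apply: (exists_nonadj_of_card_class lo_proper).
  by move: suspect_u; rewrite /suspect; case: pickP => // v + [<-]; rewrite deg_nbrs.
have neq_u x : lo x != lo u -> x != u by apply: contraNneq => ->.
case: pickP => [x /andP [xR lo_x] | /(_ w)].
  apply: induces_coP3_split; last by rewrite eq_sym.
  by rewrite -(R_spec u x) ?neq_u.
by rewrite (R_spec u w) ?neq_u ?uw ?lo_w.
Qed.

End Labelling.

(* In a complete multipartite graph, rep u is the least vertex of the part of u. *)
Definition rep (u : V) : V := [arg min_(w < u | ~~ adj u w) w].

Lemma rep_nonadj u : ~~ adj u (rep u).
Proof. by rewrite /rep; case: arg_minnP => //; exact: adj_irrefl. Qed.

Lemma rep_least u w : ~~ adj u w -> rep u <= w.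
Proof. by rewrite /rep; case: arg_minnP => [|v _ v_min /v_min //]; exact: adj_irrefl. Qed.

Section EdgeStream.
Variable s : seq {set V}.
Hypothesis s_E : edge_stream E s.

Lemma mem_edge_stream e : (e \in s) = (e \in E).
Proof. by rewrite (perm_mem s_E) mem_enum. Qed.

Lemma count_edge_stream (P : pred {set V}) : count P s = #|[set e in E | P e]|.
Proof.
rewrite (permP s_E) -size_filter cardE; apply: perm_size.
apply: uniq_perm; [exact/filter_uniq/enum_uniq | exact: enum_uniq |].
by move=> e; rewrite mem_filter !mem_enum inE andbC.
Qed.

Lemma count_incident_in W u : count (incident_in W u) s = #|nbrs u :&: W|.
Proof.
have edge_inj : injective (fun w => [set u; w]).
  move=> w1 w2 /= e12; have /set2P [w1u | //] : w1 \in [set u; w2] by rewrite -e12 set22.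
  have /set2P [w2u | -> //] : w2 \in [set u; w1] by rewrite e12 set22.
  by rewrite w1u w2u.
rewrite count_edge_stream -(card_imset _ edge_inj); apply: eq_card => e.
rewrite !inE /incident_in; apply/andP/imsetP => [[eE /andP [ue eW]] | [w]].
  have [v [e_uv uv]] := edge_at eE ue.
  move: eW; rewrite e_uv setU1K ?sub1set => [vW|]; last by rewrite inE adj_neq.
  by exists v; rewrite ?inE -?/(adj u v) ?uv.
rewrite !inE => /andP [uw wW] ->; split; first exact: uw.
by rewrite set21 setU1K ?sub1set // inE adj_neq.
Qed.

Lemma foldl_find_step_edge_stream (P : pred {set V}) :
  if foldl (find_step P) None s is Some e then e \in E /\ P e
  else forall e, e \in E -> ~~ P e.
Proof.
case: foldl (foldl_find_stepP P s) => [e /andP [es Pe] | /hasPn noP e eE].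
  by rewrite -mem_edge_stream.
by apply: noP; rewrite mem_edge_stream.
Qed.

Lemma mem_foldl_union_step_edge_stream u w :
  w != u -> (w \in foldl (union_step u) set0 s) = adj u w.
Proof.
move=> wu; rewrite mem_foldl_union_step in_set0 /=.
apply/hasP/idP => [[e es /andP [ue we]] | uw]; last first.
  by exists [set u; w]; rewrite ?mem_edge_stream ?set21 ?set22.
rewrite mem_edge_stream in es; have [v [e_uv uv]] := edge_at es ue.
by move: we; rewrite e_uv => /set2P [/eqP | ->]; rewrite ?(negbTE wu).
Qed.

End EdgeStream.

End SimpleGraph.

(** * The algorithm *)

Section Algorithm.
Variable n' : nat.
Local Notation n := n'.+1.
Local Notation V := 'I_n.
Local Notation counter := {ffun V -> 'I_n.+1}.

Definition nbits : nat := (trunc_log 2 n).+1.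

Local Notation pass_data := (counter * counter * option {set V} * {set V})%type.
(* A pass collects the counts of neighbours below mid, the degrees, a
   monochromatic edge and the neighbourhood of the suspect vertex.  The state
   between passes holds the number of binary-search rounds left, the labels,
   and the data collected by the previous pass. *)
Local Notation state := ('I_nbits.+1 * {ffun V -> V} * pass_data)%type.

Definition remaining (q : state) : nat := q.1.1.
Definition labels (q : state) : {ffun V -> V} := q.1.2.
Definition degrees (q : state) (u : V) : nat := q.2.1.1.2 u.
Definition mid (q : state) (u : V) : nat := labels q u + 2 ^ (remaining q).-1.

Definition collect (q : state) (c : pass_data) (e : {set V}) : pass_data :=
  (count_step (fun u => incident_in [set w : V | w < mid q u] u) c.1.1.1 e,
   count_step (incident_in setT) c.1.1.2 e,
   find_step (monochromatic (labels q)) c.1.2 e,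
   union_step (odflt ord0 (suspect (labels q) (degrees q))) c.2 e).

Definition no_data : pass_data := ([ffun => ord0], [ffun => ord0], None, set0).

Definition refine (q : state) (below : counter) : {ffun V -> V} :=
  [ffun u => if (0 < remaining q) && (mid q u <= below u) then inord (mid q u)
             else labels q u].

Definition update (q : state) (c : pass_data) : state :=
  (inord (remaining q).-1, refine q c.1.1.1, c).

Definition start : state := (ord_max, [ffun => ord0], no_data).

Definition pass (s : seq {set V}) (q : state) : state :=
  update q (foldl (collect q) no_data s).

Definition answer (q : state) : option {set V} :=
  verdict (labels q) (degrees q) q.2.1.2 q.2.2.

Lemma foldl_collect q c s :
  foldl (collect q) c s =
  (foldl (count_step (fun u => incident_in [set w : V | w < mid q u] u)) c.1.1.1 s,
   foldl (count_step (incident_in setT)) c.1.1.2 s,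
   foldl (find_step (monochromatic (labels q))) c.1.2 s,
   foldl (union_step (odflt ord0 (suspect (labels q) (degrees q)))) c.2 s).
Proof. by elim: s c => [|e s IH] [[[c1 c2] c3] c4] //=; rewrite IH. Qed.

Section Correctness.
Variables (E : {set {set V}}) (s : seq {set V}).
Hypotheses (E_simple : simple_graph E) (s_E : edge_stream E s).

Lemma remaining_pass q : remaining (pass s q) = (remaining q).-1.
Proof. by rewrite /remaining /= inordK // (leq_ltn_trans (leq_pred _) (ltn_ord _)). Qed.

Lemma degrees_pass q u : degrees (pass s q) u = #|nbrs E u|.
Proof.
rewrite /degrees /= foldl_collect foldl_count_step ffunE add0n.
rewrite (count_incident_in E_simple s_E) setIT.
by apply/minn_idPl/ltnW; rewrite -(setIT (nbrs E u)) card_nbrs_lt.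
Qed.

Lemma labels_pass q u :
  labels (pass s q) u =
  if (0 < remaining q) && (mid q u <= rep E u) then inord (mid q u) else labels q u.
Proof.
rewrite /labels /= ffunE foldl_collect foldl_count_step ffunE add0n.
rewrite (count_incident_in E_simple s_E) (minn_idPl (ltnW (card_nbrs_lt E_simple _ _))).
by rewrite (leq_card_nbrs_below (rep_nonadj E_simple) (rep_least E_simple)).
Qed.

Lemma labels_iter_pass k : k <= nbits ->
  remaining (iter k (pass s) start) = nbits - k /\
  forall u, labels (iter k (pass s) start) u =
            2 ^ (nbits - k) * (rep E u %/ 2 ^ (nbits - k)) :> nat.
Proof.
elim: k => [_ | k IH lt_k].
  split=> [|u]; rewrite ?subn0 // /labels ffunE divn_small ?muln0 //.
  exact: ltn_trans (ltn_ord _) (trunc_log_ltn _ _).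
have [rem_k lab_k] := IH (ltnW lt_k).
have rem_eq : nbits - k = (nbits - k.+1).+1 by rewrite subnSK.
rewrite iterS; set q := iter k (pass s) start in rem_k lab_k *.
split; first by rewrite remaining_pass rem_k rem_eq.
move=> u; rewrite labels_pass /mid rem_k rem_eq /= lab_k rem_eq -[RHS]round_down_halve.
case: ifP => [le_mid | _]; last by rewrite lab_k rem_eq.
by rewrite inordK // (leq_ltn_trans le_mid).
Qed.

Lemma answer_correct : answers_coP3 E (answer (iter nbits.+1 (pass s) start)).
Proof.
have [rem0 lab] := labels_iter_pass (leqnn nbits).
rewrite subnn in rem0 lab; set q := iter nbits (pass s) start in rem0 lab *.
have labels_final : labels (pass s q) = labels q.
  by apply/ffunP => u; rewrite labels_pass rem0.
have labels_rep u : labels q u = rep E u.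
  by apply: ord_inj; rewrite lab expn0 mul1n divn1.
(* q is itself the result of a pass, as nbits > 0 *)
have degrees_q u : degrees q u = #|nbrs E u| by exact: degrees_pass.
rewrite iterS /answer labels_final.
apply: (verdict_correct E_simple) => [u | u w | u | | u w].
- by rewrite labels_rep rep_nonadj.
- by rewrite labels_rep; exact: rep_least.
- exact: degrees_pass.
- by rewrite /= foldl_collect; exact: foldl_find_step_edge_stream.
have -> : suspect (labels q) (degrees (pass s q)) = suspect (labels q) (degrees q).
  by apply: eq_pick => v; rewrite degrees_pass degrees_q.
by rewrite /= foldl_collect /= => ->; exact: mem_foldl_union_step_edge_stream.
Qed.

End Correctness.

Lemma card_state : 1 < n ->
  #|{: state}| * #|{: pass_data}| <= 2 ^ (20 * n * trunc_log 2 n).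
Proof.
move=> n_gt1; set l := trunc_log 2 n; set b := 2 * n * l.
have l_gt0 : 0 < l by rewrite trunc_log_gt0.
have n_lt : n < 2 ^ l.+1 := trunc_log_ltn n (isT : 1 < 2).
have le_b x : x <= b -> 2 ^ x <= 2 ^ b by move=> le_x; rewrite leq_exp2l.
have card_ffun_le (T : finType) : #|T| <= n.+1 -> #|{ffun V -> T}| <= 2 ^ b.
  move=> le_T; have le_lb : l.+1 * n <= b by rewrite /b; nia.
  rewrite card_ffun card_ord; apply: leq_trans (le_b _ le_lb).
  by rewrite expnM leq_exp2r // (leq_trans le_T).
have card_round : #|'I_nbits.+1| <= 2 ^ b.
  have le_rb : l.+2 <= b by rewrite /b; nia.
  by rewrite card_ord; apply: leq_trans (ltnW (ltn_expl _ _)) (le_b _ le_rb).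
have card_labels : #|{ffun V -> V}| <= 2 ^ b by rewrite card_ffun_le ?card_ord.
have card_counter : #|counter| <= 2 ^ b by rewrite card_ffun_le ?card_ord.
have card_nbhd : #|{set V}| <= 2 ^ b by rewrite card_set card_ord le_b // /b; nia.
have card_mono : #|{: option {set V}}| <= 2 ^ b.
  have le_nb : n.+1 <= b by rewrite /b; nia.
  rewrite card_option card_set card_ord; apply: leq_trans (le_b _ le_nb).
  by rewrite ltn_exp2l.
have card_data : #|{: pass_data}| <= 2 ^ (b + b + b + b).
  by rewrite !card_prod !leq_mul_exp2.
have card_st : #|{: state}| <= 2 ^ (b + b + (b + b + b + b)).
  by rewrite card_prod; apply: leq_mul_exp2 card_data; rewrite card_prod leq_mul_exp2.
apply: leq_trans (leq_mul_exp2 card_st card_data) _.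
by rewrite leq_exp2l // /b; nia.
Qed.

End Algorithm.

Theorem corollary26 :
  exists c k : nat, forall n : nat, 2 <= n ->
    exists (p S : nat) (A : stream_alg n S),
      p <= c * trunc_log 2 n /\
      S <= c * n * (trunc_log 2 n) ^ k /\
      solves_IndSub_coP3 A p.
Proof.
exists 20, 1; case=> [// | n'] n_gt1.
have [A outA] := stream_alg_of_passes (start n') (no_data n') (@collect n')
  (@update n') (@answer n') (card_state n_gt1).
exists (nbits n').+1, (20 * n'.+1 * trunc_log 2 n'.+1), A.
have l_gt0 : 0 < trunc_log 2 n'.+1 by rewrite trunc_log_gt0.
split; first by rewrite /nbits; lia.
split; first by rewrite expn1.
by move=> E s E_simple s_E; rewrite outA; exact: answer_correct.
Qed.
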